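(* For every integer $m \geq 1$, the complete bipartite graph $K_{m,m+1}$ is stable.
   Context: For a simple graph $G$, the independence polynomial is $i(G,x)=\sum_{k=0}^{\alpha(G)} i_k(G)x^k$, where $i_k(G)$ is the number of independent sets of size $k$ in $G$ (with $i_0(G)=1$). A graph $G$ is called stable if every root $z$ of $i(G,x)$ satisfies $\mathrm{Re}(z)\leq 0$. $K_{a,b}$ denotes the complete bipartite graph with parts of sizes $a$ and $b$; its independence polynomial is $(1+x)^a+(1+x)^b-1$. *)

From HB Require Import structures.
From mathcomp Require Import all_boot all_order all_algebra all_field.
Set Implicit Arguments. Unset Strict Implicit. Unset Printing Implicit Defensive.
Import Order.TTheory GRing.Theory Num.Theory.
Local Open Scope ring_scope.

(* A simple graph is given by a symmetric irreflexive relation e on a finType. *)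
Definition indep_set (T : finType) (e : rel T) (S : {set T}) : bool :=
  [forall x in S, forall y in S, ~~ e x y].

Definition indep_poly (R : nzRingType) (T : finType) (e : rel T) : {poly R} :=
  \sum_(S : {set T} | indep_set e S) 'X^#|S|.

(* Stable: every complex root z of i(G,x) has Re z <= 0.  Complex numbers are
   taken as algC; all roots of an integer polynomial are algebraic. *)
Definition stable (T : finType) (e : rel T) : Prop :=
  forall z : algC, root (indep_poly algC e) z -> 'Re z <= 0.

Definition Kbip_rel (a b : nat) : rel ('I_a + 'I_b)%type :=
  fun x y => match x, y with
             | inl _, inr _ => true
             | inr _, inl _ => true
             | _, _ => false
             end.
Arguments stable [T] e.
Arguments Kbip_rel : clear implicits.

(* The independent sets of K_{a,b} are the subsets of either side, so
   i(K_{a,b}, x) = (1 + x)^a + (1 + x)^b - 1.  A root z of i(K_{m,m+1}, x)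
   therefore satisfies (1 + z)^m (2 + z) = 1; but if Re z > 0 then
   |1 + z| > 1 and |2 + z| > 1, so the left-hand side has modulus > 1. *)
From HB Require Import structures.
From mathcomp Require Import all_boot all_order all_algebra all_field.
From mathcomp Require Import ring.
Import Order.TTheory GRing.Theory Num.Theory.
Local Open Scope ring_scope.

Lemma big_orb (R : Type) (idx : R) (op : Monoid.com_law idx) (I : finType)
    (P Q : pred I) (F : I -> R) :
  op (\big[op/idx]_(i | P i || Q i) F i) (\big[op/idx]_(i | P i && Q i) F i) =
  op (\big[op/idx]_(i | P i) F i) (\big[op/idx]_(i | Q i) F i).
Proof.
rewrite (bigID Q (fun i => P i || Q i)) [in RHS](bigID Q P) /=.
rewrite (eq_bigl Q) => [|i]; last by case: (P i); case: (Q i).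
under [X in op (op _ X) _]eq_bigl do rewrite andb_orl andbN orbF.
by rewrite [RHS]Monoid.mulmC [X in _ = op _ X]Monoid.mulmC Monoid.mulmA.
Qed.

Lemma sum_subset_exprn (R : comNzRingType) (T : finType) (A : {set T}) (x : R) :
  \sum_(S : {set T} | S \subset A) x ^+ #|S| = (1 + x) ^+ #|A|.
Proof.
pose F i := if i \in A then x else 0.
have -> : (1 + x) ^+ #|A| = \prod_i (F i + 1).
  rewrite -prodr_const (big_mkcond (mem A)) /=.
  by apply: eq_bigr => i _; rewrite /F; case: (i \in A); rewrite ?add0r // addrC.
rewrite (@bigA_distr _ _ _ _ _ _ F (fun=> 1)) [LHS]big_mkcond /=.
apply: eq_bigr => S _; rewrite -big_mkcond /=.
have [sSA | /subsetPn[i iS iA]] := boolP (S \subset A).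
  rewrite -prodr_const; apply: eq_bigr => i iS.
  by rewrite /F (subsetP sSA i iS).
by rewrite (bigD1 i) //= /F (negbTE iA) mul0r.
Qed.

Section CompleteBipartite.
Variables a b : nat.

Definition Kbip_left : {set 'I_a + 'I_b} := inl @: [set: 'I_a].

Lemma card_Kbip_left : #|Kbip_left| = a.
Proof. by rewrite card_imset ?cardsT ?card_ord //; apply: inl_inj. Qed.

Lemma card_Kbip_leftC : #|~: Kbip_left| = b.
Proof.
by apply/eqP; rewrite -(eqn_add2l a) -{1}card_Kbip_left cardsC card_sum !card_ord.
Qed.

Lemma Kbip_relE x y : Kbip_rel a b x y = ((x \in Kbip_left) != (y \in Kbip_left)).
Proof.
have mem_left z : (z \in Kbip_left) = if z is inl _ then true else false.
  by case: z => [i | j]; [rewrite imset_f | apply/imsetP => -[]].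
by rewrite !mem_left; case: x; case: y.
Qed.

Lemma indep_Kbip (S : {set 'I_a + 'I_b}) :
  indep_set (Kbip_rel a b) S = (S \subset Kbip_left) || (S \subset ~: Kbip_left).
Proof.
apply/forall_inP/idP => [indS | sideS x xS].
  apply/negPn/negP; rewrite negb_or => /andP[/subsetPn[x xS xL] /subsetPn[y yS]].
  rewrite inE negbK => yL.
  by move/forall_inP: (indS x xS) => /(_ y yS); rewrite Kbip_relE yL (negbTE xL).
apply/forall_inP => y yS; rewrite Kbip_relE negbK.
case/orP: sideS => /subsetP sub; move: (sub x xS) (sub y yS); rewrite ?inE.
  by move=> -> ->.
by move=> /negbTE-> /negbTE->.
Qed.

Lemma indep_poly_Kbip (R : comNzRingType) :
  indep_poly R (Kbip_rel a b) = (1 + 'X) ^+ a + (1 + 'X) ^+ b - 1.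
Proof.
have sum_both_sides : \sum_(S : {set _} |
    (S \subset Kbip_left) && (S \subset ~: Kbip_left)) 'X^#|S| = 1 :> {poly R}.
  under eq_bigl do rewrite -subsetI setICr.
  by rewrite sum_subset_exprn cards0.
apply: (addIr 1); rewrite subrK -[X in _ + X = _]sum_both_sides /indep_poly.
under eq_bigl do rewrite indep_Kbip.
by rewrite big_orb !sum_subset_exprn card_Kbip_left card_Kbip_leftC.
Qed.

End CompleteBipartite.

Lemma normr_natrD_gt1 {C : numClosedFieldType} (n : nat) (z : C) :
  (0 < n)%N -> 0 < 'Re z -> 1 < `|n%:R + z|.
Proof.
move=> n_gt0 Re_z_gt0; apply: lt_le_trans (leif_Re_Creal _).1.
rewrite raddfD /= (Creal_ReP _ _) ?realn //.
by apply: (@le_lt_trans _ _ n%:R); rewrite ?ler1n ?ltrDl.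
Qed.

Theorem proposition2p1 (m : nat) (hm : (1 <= m)%N) : stable (Kbip_rel m m.+1).
Proof.
move=> z; rewrite /root indep_poly_Kbip !hornerE subr_eq0 => /eqP root_z.
rewrite real_leNgt ?Creal_Re ?real0 //; apply/negP => Re_z_gt0.
have factored : (1 + z) ^+ m * (2 + z) = 1 by rewrite -[RHS]root_z exprS; ring.
have := congr1 Num.norm factored; rewrite normrM normrX normr1 => norm_one.
have : 1 < `|1 + z| ^+ m * `|2 + z|.
  have norm_1Dz_gt1 : 1 < `|1 + z| := normr_natrD_gt1 1 z isT Re_z_gt0.
  apply: lt_le_trans (normr_natrD_gt1 2 z isT Re_z_gt0) _.
  by rewrite ler_peMl // exprn_ege1 // ltW.
by rewrite norm_one ltxx.
Qed.
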